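(* For $2\le k\le n$, $$d(n,k-1)=\sum_{a=1}^{k-1}\binom{k-1}{a}\,d(a,a)\,d(n-a,k-a).$$
   Context: A decreasing planar tree on a finite set $V\subseteq\mathbb N$ is a rooted planar tree (children of each node totally ordered) with node set $V$ such that every node is larger than all of its descendants (so the root is $\max V$). For such a tree $T$, $L(T)$ is the largest leaf of $T$. For $n\ge1$, $d(n,k)$ denotes the number of decreasing planar trees $T$ on $[1,n]$ with $L(T)\le k$ (so $d(n,k)=0$ if $k\notin[1,n]$, and $d(1,1)=1$). *)

From Stdlib Require Import List ClassicalEpsilon.
From mathcomp Require Import all_boot.
Set Implicit Arguments. Unset Strict Implicit. Unset Printing Implicit Defensive.

Inductive ptree : Type := PNode : nat -> list ptree -> ptree.

Fixpoint labels (t : ptree) : list nat :=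
  match t with
  | PNode v cs => v :: (fix go (l : list ptree) : list nat :=
                          match l with nil => nil | c :: l' => labels c ++ go l' end) cs
  end.

Fixpoint leaves (t : ptree) : list nat :=
  match t with
  | PNode v nil => v :: nil
  | PNode v cs => (fix go (l : list ptree) : list nat :=
                     match l with nil => nil | c :: l' => leaves c ++ go l' end) cs
  end.

Fixpoint decreasing (t : ptree) : Prop :=
  match t with
  | PNode v cs => (fix go (l : list ptree) : Prop :=
                     match l with
                     | nil => True
                     | c :: l' => (forall x, List.In x (labels c) -> x < v)
                                  /\ decreasing c /\ go l'
                     end) cs
  end.

Definition largest_leaf (t : ptree) : nat := foldr maxn 0 (leaves t).

Definition dpt_on (n : nat) (t : ptree) : Prop :=
  List.NoDup (labels t) /\ (forall x, List.In x (labels t) <-> (1 <= x <= n)) /\ decreasing t.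

Definition counts (P : ptree -> Prop) (m : nat) : Prop :=
  exists l : list ptree, List.NoDup l /\ (forall t, List.In t l <-> P t) /\ length l = m.

(* d(n,k): number of decreasing planar trees T on [1,n] with L(T) <= k;
   by convention 0 when k is not in [1,n]. *)
Definition d (n k : nat) : nat :=
  if (1 <= k <= n) then
    epsilon (inhabits 0) (counts (fun t => dpt_on n t /\ largest_leaf t <= k))
  else 0.

(* Let T be counted by d(n, k-1), with 2 <= k <= n. The node k is not a leaf, so we
   may detach its first subtree S. Since T is decreasing, the label set A of S is a
   nonempty subset of [1, k-1], and what remains is a decreasing tree on [1, n] \ A
   all of whose leaves are at most k (k may have become a leaf). Grafting S back
   inverts this, so T <-> (A, S, T') is a bijection. Relabelling order-preservingly,
   decreasing trees on A are counted by d(a, a) with a = |A|, and the trees T' by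
   d(n - a, k - a), because k is the (k - a)-th smallest element of [1, n] \ A.
   There are C(k-1, a) choices of A of size a. As d is defined by choice, the same
   decomposition also shows, by strong induction on n, that all these counts exist. *)

From HB Require Import structures.
From Stdlib Require Import ClassicalEpsilon.
From mathcomp Require Import all_boot zify.
Set Implicit Arguments. Unset Strict Implicit. Unset Printing Implicit Defensive.

(** * Planar trees as a countable type *)

Section NestedInduction.
Variable P : ptree -> Prop.
Hypothesis IH : forall v cs, (forall c, List.In c cs -> P c) -> P (PNode v cs).

Fixpoint ptree_nested_ind (t : ptree) : P t :=
  match t with
  | PNode v cs => IH v ((fix go (l : seq ptree) : forall c, List.In c l -> P c :=
       match l with
       | [::] => fun c (hc : List.In c [::]) => False_ind _ hc
       | c0 :: l' => fun c hc =>
           match hc with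
           | or_introl e => eq_ind c0 P (ptree_nested_ind c0) c e
           | or_intror h => go l' c h
           end
       end) cs)
  end.
End NestedInduction.

Fixpoint ptree_to_gentree (t : ptree) : GenTree.tree nat :=
  match t with PNode v cs => GenTree.Node v (map ptree_to_gentree cs) end.

Fixpoint gentree_to_ptree (g : GenTree.tree nat) : ptree :=
  match g with
  | GenTree.Node v gs => PNode v (map gentree_to_ptree gs)
  | GenTree.Leaf v => PNode v [::]
  end.

Lemma ptree_to_gentreeK : cancel ptree_to_gentree gentree_to_ptree.
Proof.
elim/ptree_nested_ind => v cs IH /=; congr PNode.
elim: cs IH => //= c cs IHcs IH; rewrite IH /=; last by left.
by rewrite IHcs // => c' hc'; apply: IH; right.
Qed.

HB.instance Definition _ := Countable.copy ptree (can_type ptree_to_gentreeK).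

Lemma InE (T : eqType) (x : T) s : List.In x s <-> x \in s.
Proof.
elim: s => //= y s IH; rewrite in_cons; split.
  by case=> [->|/IH ->]; rewrite ?eqxx ?orbT.
by case/orP=> [/eqP ->|/IH]; [left|right].
Qed.

Lemma ptree_ind_mem (P : ptree -> Prop) :
  (forall v cs, (forall c, c \in cs -> P c) -> P (PNode v cs)) -> forall t, P t.
Proof. by move=> IH; elim/ptree_nested_ind => v cs IHcs; apply: IH => c /InE /IHcs. Qed.

Lemma NoDupE (T : eqType) (s : seq T) : List.NoDup s <-> uniq s.
Proof.
elim: s => [|x s IH] /=; first by split=> // _; constructor.
split.
  by move=> h; inversion h; subst; apply/andP; split; [apply/negP => /InE|apply/IH].
by case/andP=> hx hs; constructor; [move/InE; apply/negP|apply/IH].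
Qed.

Lemma lengthE (T : Type) (s : seq T) : length s = size s.
Proof. by elim: s => //= x s ->. Qed.

(** * Counting trees *)

Lemma countsE P m : counts P m <->
  exists s : seq ptree, [/\ uniq s, forall t, t \in s <-> P t & size s = m].
Proof.
split; first by case=> s [/NoDupE us [hs <-]]; exists s; rewrite -lengthE; split=> // t; rewrite -InE.
case=> s [us hs <-]; exists s; split; first exact/NoDupE.
by split=> [t|]; rewrite ?InE ?lengthE.
Qed.

Lemma counts_unique P m m' : counts P m -> counts P m' -> m = m'.
Proof.
move=> /countsE [s [us hs <-]] /countsE [s' [us' hs' <-]].
by apply: perm_size; apply: uniq_perm => // t; apply/idP/idP => [/hs/hs'|/hs'/hs].
Qed.

Lemma counts_bij (P Q : ptree -> Prop) f g m : counts P m ->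
  (forall t, P t -> Q (f t)) -> (forall t, Q t -> P (g t) /\ f (g t) = t) ->
  (forall t, P t -> g (f t) = t) -> counts Q m.
Proof.
move=> /countsE [s [us hs <-]] hPQ hQP hgf; apply/countsE; exists (map f s); split.
- rewrite map_inj_in_uniq // => x y /hs hx /hs hy e.
  by rewrite -(hgf _ hx) -(hgf _ hy) e.
- move=> t; split; first by case/mapP => x /hs hx ->; apply: hPQ.
  by move=> /hQP [/hs h <-]; apply: map_f.
- by rewrite size_map.
Qed.

Lemma counts_ext (P P' : ptree -> Prop) m : (forall t, P t <-> P' t) -> counts P m -> counts P' m.
Proof. by move=> h hc; apply: (counts_bij hc (f := id) (g := id)) => t /h. Qed.

Lemma counts0 : counts (fun _ => False) 0.
Proof. by apply/countsE; exists [::]. Qed.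

Lemma counts_or (P P' : ptree -> Prop) m m' : counts P m -> counts P' m' ->
  (forall t, P t -> P' t -> False) -> counts (fun t => P t \/ P' t) (m + m').
Proof.
move=> /countsE [s [us hs <-]] /countsE [s' [us' hs' <-]] disj.
apply/countsE; exists (s ++ s'); split; last by rewrite size_cat.
- rewrite cat_uniq us us' andbT; apply/hasP => -[t /hs' h' /hs h]; exact: disj h h'.
- by move=> t; rewrite mem_cat; split=> [/orP [/hs|/hs']|[/hs|/hs'] ->]; rewrite ?orbT; auto.
Qed.

Lemma counts_sumn (I : eqType) (r : seq I) (P : I -> ptree -> Prop) (m : I -> nat) :
  uniq r -> (forall i, i \in r -> counts (P i) (m i)) ->
  (forall i j t, i \in r -> j \in r -> P i t -> P j t -> i = j) ->
  counts (fun t => exists2 i, i \in r & P i t) (sumn (map m r)).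
Proof.
elim: r => [|i r IH] /= ur hc disj.
  by apply: counts_ext _ counts0 => t; split=> // -[].
case/andP: ur => ir ur.
have sub : {subset r <= i :: r} by move=> j hj; rewrite in_cons hj orbT.
have hr := IH ur (fun j hj => hc j (sub j hj))
  (fun j j' t hj hj' => disj j j' t (sub j hj) (sub j' hj')).
apply: counts_ext _ (counts_or (hc i (mem_head _ _)) hr _) => [t|t hi [j hj hjt]].
  split=> [[hi|[j hj hjt]]|[j]]; first by exists i; rewrite ?mem_head.
    by exists j; first exact: sub.
  by rewrite in_cons => /orP [/eqP ->|hj]; [left|right; exists j].
by move: ir; rewrite (disj i j t (mem_head _ _) (sub j hj) hi hjt) hj.
Qed.

Lemma counts_mul (P1 P2 : ptree -> Prop) (f : ptree -> ptree -> ptree) m1 m2 :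
  counts P1 m1 -> counts P2 m2 ->
  (forall s t s' t', P1 s -> P2 t -> P1 s' -> P2 t' -> f s t = f s' t' -> s = s' /\ t = t') ->
  counts (fun u => exists s t, [/\ P1 s, P2 t & u = f s t]) (m1 * m2).
Proof.
move=> /countsE [s1 [u1 h1 <-]] /countsE [s2 [u2 h2 <-]] finj.
apply/countsE; exists [seq f x y | x <- s1, y <- s2]; split; last exact: size_allpairs.
- apply: allpairs_uniq => // -[x y] [x' y'] /allpairsP [[a b] /= [ha hb [-> ->]]].
  move=> /allpairsP [[a' b'] /= [ha' hb' [-> ->]]] /= e.
  by have [-> ->] := finj _ _ _ _ (proj1 (h1 _) ha) (proj1 (h2 _) hb)
    (proj1 (h1 _) ha') (proj1 (h2 _) hb') e.
- move=> u; split=> [/allpairsP [[x y] [hx hy ->]]|[x [y [hx hy ->]]]].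
    by exists x, y; split; [apply/h1|apply/h2|].
  by apply: allpairs_f; [apply/h1|apply/h2].
Qed.

(** * Labels, leaves and relabelling *)

Lemma labelsE v cs : labels (PNode v cs) = v :: flatten (map labels cs).
Proof. by congr cons; elim: cs => //= c cs ->. Qed.

Lemma leavesE v cs :
  leaves (PNode v cs) = if cs is [::] then [:: v] else flatten (map leaves cs).
Proof. by case: cs => //= c cs; congr cat; elim: cs => //= c' cs ->. Qed.

Lemma decreasingE v cs : decreasing (PNode v cs) <->
  (forall c, c \in cs -> (forall x, x \in labels c -> x < v) /\ decreasing c).
Proof.
rewrite /=; elim: cs => [|c cs IH]; first by split.
split.
  case=> h1 [h2 /IH h3] c'; rewrite in_cons => /orP [/eqP ->|/h3 //].
  by split=> // x /InE; apply: h1.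
move=> h; split; first by move=> x /InE; apply: (proj1 (h c (mem_head _ _))).
split; first exact: (proj2 (h c (mem_head _ _))).
by apply/IH => c' hc'; apply: h; rewrite in_cons hc' orbT.
Qed.

Lemma mem_labels v cs x :
  (x \in labels (PNode v cs)) = (x == v) || has (fun c => x \in labels c) cs.
Proof.
rewrite labelsE in_cons; congr orb; apply/flattenP/hasP.
  by case=> l /mapP [c hc ->] hx; exists c.
by case=> c hc hx; exists (labels c) => //; apply: map_f.
Qed.

Lemma mem_labels_child v cs c x : c \in cs -> x \in labels c -> x \in labels (PNode v cs).
Proof. by move=> hc hx; rewrite mem_labels; apply/orP; right; apply/hasP; exists c. Qed.

Lemma mem_leaves v cs x : x \in leaves (PNode v cs) ->
  (cs = [::] /\ x = v) \/ exists2 c, c \in cs & x \in leaves c.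
Proof.
rewrite leavesE; case: cs => [|c0 cs]; first by rewrite inE => /eqP ->; left.
by move=> /flattenP [l /mapP [c hc ->] hx]; right; exists c.
Qed.

Lemma mem_leaves_child v cs c x : c \in cs -> x \in leaves c -> x \in leaves (PNode v cs).
Proof.
move=> hc hx; rewrite leavesE; case: cs hc => // c0 cs hc.
by apply/flattenP; exists (leaves c) => //; apply: map_f.
Qed.

Lemma leaves_sub_labels t : {subset leaves t <= labels t}.
Proof.
elim/ptree_ind_mem: t => v cs IH x /mem_leaves [[_ ->]|[c hc hx]].
  by rewrite labelsE mem_head.
exact: (mem_labels_child v hc (IH c hc x hx)).
Qed.

Lemma largest_leaf_leq t k : (largest_leaf t <= k) = all (leq^~ k) (leaves t).
Proof. by rewrite /largest_leaf; elim: (leaves t) => //= x s <-; rewrite geq_max. Qed.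

Definition tree_on (X : seq nat) t := [/\ uniq (labels t), labels t =i X & decreasing t].

Lemma dpt_on_tree_on n t : dpt_on n t <-> tree_on (iota 1 n) t.
Proof.
have memX x : (x \in iota 1 n) = (1 <= x <= n) by rewrite mem_iota add1n ltnS.
split=> [[h1 [h2 h3]]|[h1 h2 h3]]; split=> //; first exact/NoDupE.
  by move=> x; rewrite memX; apply/idP/idP => [/InE /h2|/h2 /InE].
- exact/NoDupE.
- by split=> // x; rewrite InE h2 memX.
Qed.

Fixpoint relabel (f : nat -> nat) (t : ptree) : ptree :=
  match t with PNode v cs => PNode (f v) (map (relabel f) cs) end.

Lemma labels_relabel f t : labels (relabel f t) = map f (labels t).
Proof.
elim/ptree_ind_mem: t => v cs IH.
rewrite [relabel _ _]/= !labelsE /= map_flatten -!map_comp.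
by congr (_ :: flatten _); apply/eq_in_map => c /IH.
Qed.

Lemma leaves_relabel f t : leaves (relabel f t) = map f (leaves t).
Proof.
elim/ptree_ind_mem: t => v cs IH; rewrite [relabel _ _]/= !leavesE.
case: cs IH => //= c cs IH; rewrite map_cat map_flatten -!map_comp IH ?mem_head //.
by congr (_ ++ flatten _); apply/eq_in_map => c' hc'; apply: IH; rewrite in_cons hc' orbT.
Qed.

Lemma eq_in_relabel f g t : {in labels t, f =1 g} -> relabel f t = relabel g t.
Proof.
elim/ptree_ind_mem: t => v cs IH h /=; rewrite h ?labelsE ?mem_head //.
by congr PNode; apply/eq_in_map => c hc; apply: IH => // x /(mem_labels_child v hc) /h.
Qed.

Lemma relabel_comp f g t : relabel g (relabel f t) = relabel (g \o f) t.
Proof.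
elim/ptree_ind_mem: t => v cs IH /=; congr PNode.
by rewrite -map_comp; apply/eq_in_map => c /IH.
Qed.

Lemma relabel_id t : relabel id t = t.
Proof.
elim/ptree_ind_mem: t => v cs IH /=; congr PNode.
by rewrite -[RHS]map_id; apply/eq_in_map => c /IH.
Qed.

Lemma decreasing_relabel f t : {in labels t &, {homo f : x y / x < y}} ->
  decreasing t -> decreasing (relabel f t).
Proof.
elim/ptree_ind_mem: t => v cs IH hf /decreasingE hd /=.
apply/decreasingE => _ /mapP [c hc ->]; have [h1 h2] := hd c hc; split.
  rewrite labels_relabel => _ /mapP [y hy ->].
  have hv : v \in labels (PNode v cs) by rewrite labelsE mem_head.
  exact: (hf _ _ (mem_labels_child v hc hy) hv (h1 y hy)).
by apply: IH => // x y hx hy; apply: hf; exact: (mem_labels_child v hc).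
Qed.

Lemma sorted_ltn_index_mono (X : seq nat) : sorted ltn X ->
  {in X &, {mono index^~ X : x y / x < y}}.
Proof.
move=> so x y hx hy; apply/idP/idP; first exact: (sorted_ltn_index ltn_trans so).
apply: contraLR; rewrite -!leqNgt leq_eqVlt => /orP [/eqP e|].
  by rewrite -(nth_index 0 hy) e nth_index.
by move/(sorted_ltn_index ltn_trans so _ _ hy hx)/ltnW.
Qed.

Section RankRelabel.
Variables (X : seq nat) (c : nat).
Hypotheses (sortedX : sorted ltn X) (cX : c \in X).

Let rank x := (index x X).+1.
Let unrank y := nth 0 X y.-1.

Let uniqX : uniq X.
Proof. exact: (sorted_uniq ltn_trans ltnn sortedX). Qed.

Let rankK : {in X, cancel rank unrank}.
Proof. by move=> x hx; rewrite /unrank /rank /= nth_index. Qed.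

Let rank_mem x : x \in X -> rank x \in iota 1 (size X).
Proof. by move=> hx; rewrite mem_iota add1n ltnS /rank ltnS index_mem. Qed.

Let unrank_mem y : y \in iota 1 (size X) -> y.-1 < size X.
Proof. by rewrite mem_iota add1n; case: y => //= y; rewrite ltnS. Qed.

Let unrankK y : y \in iota 1 (size X) -> rank (unrank y) = y /\ unrank y \in X.
Proof.
move=> hy; have hi := unrank_mem hy; split; last exact: mem_nth.
by rewrite /rank /unrank index_uniq //; move: hy; rewrite mem_iota; case: y {hi}.
Qed.

Let rank_ltn_mono : {in X &, {mono rank : x y / x < y}}.
Proof. by move=> x y hx hy; rewrite ltnS sorted_ltn_index_mono. Qed.

Let rank_leq_mono : {in X &, {mono rank : x y / x <= y}}.
Proof. by move=> x y hx hy; rewrite leqNgt rank_ltn_mono // -leqNgt. Qed.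

Let unrank_ltn_homo : {in iota 1 (size X) &, {homo unrank : y z / y < z}}.
Proof.
move=> y z hy hz hyz; apply: (sorted_ltn_nth ltn_trans 0 sortedX); rewrite ?inE ?unrank_mem //.
by move: hy hyz; rewrite mem_iota; case: y => // y _; case: z {hz}.
Qed.

Let trees_of t := tree_on X t /\ all (leq^~ c) (leaves t).
Let ranked_trees t := dpt_on (size X) t /\ largest_leaf t <= rank c.

Let rank_trees t : trees_of t -> ranked_trees (relabel rank t).
Proof.
case=> [[hu hm hd] hl]; split.
  apply/dpt_on_tree_on; split.
  - rewrite labels_relabel map_inj_in_uniq // => x y hx hy e.
    by rewrite -(rankK (x := x)) ?e ?rankK // -hm.
  - move=> y; rewrite labels_relabel; apply/mapP/idP => [[x hx ->]|hy].
      by apply: rank_mem; rewrite -hm.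
    by have [h1 h2] := unrankK hy; exists (unrank y); rewrite ?hm.
  - by apply: decreasing_relabel => // x y hx hy; rewrite rank_ltn_mono // -hm.
rewrite largest_leaf_leq leaves_relabel all_map; apply/allP => x hx /=.
have hxX : x \in X by rewrite -hm; apply: leaves_sub_labels.
by rewrite rank_leq_mono //; apply: (allP hl).
Qed.

Let unrank_trees t : ranked_trees t ->
  trees_of (relabel unrank t) /\ relabel rank (relabel unrank t) = t.
Proof.
case=> /dpt_on_tree_on [hu hm hd] hl; split; last first.
  rewrite relabel_comp -[RHS]relabel_id; apply: eq_in_relabel => y hy /=.
  by rewrite hm in hy; have [] := unrankK hy.
split; first split.
- rewrite labels_relabel map_inj_in_uniq // => y z hy hz e.
  rewrite hm in hy; rewrite hm in hz.
  by have [e1 _] := unrankK hy; have [e2 _] := unrankK hz; rewrite -e1 e e2.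
- move=> x; rewrite labels_relabel; apply/mapP/idP => [[y hy ->]|hx].
    by rewrite hm in hy; have [] := unrankK hy.
  by exists (rank x); rewrite ?rankK // hm rank_mem.
- by apply: decreasing_relabel => // y z hy hz; apply: unrank_ltn_homo; rewrite -hm.
rewrite leaves_relabel all_map; apply/allP => y hy /=.
have hyN : y \in iota 1 (size X) by rewrite -hm; apply: leaves_sub_labels.
move: hl; rewrite largest_leaf_leq => /allP /(_ y hy).
by have [e1 e2] := unrankK hyN; rewrite -(rank_leq_mono e2 cX) e1.
Qed.

Lemma counts_tree_on_sorted m :
  counts (fun t => dpt_on (size X) t /\ largest_leaf t <= (index c X).+1) m ->
  counts (fun t => tree_on X t /\ all (leq^~ c) (leaves t)) m.
Proof.
move=> h; apply: (counts_bij h (f := relabel unrank) (g := relabel rank)).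
- by move=> t /unrank_trees [].
- move=> t ht; split; first exact: rank_trees.
  case: ht => [[_ hm _] _]; rewrite relabel_comp -[RHS]relabel_id.
  by apply: eq_in_relabel => x hx /=; apply: rankK; rewrite -hm.
- by move=> t /unrank_trees [].
Qed.
End RankRelabel.

(** * Grafting a subtree onto a node *)

Fixpoint graft (k : nat) (S t : ptree) {struct t} : ptree :=
  match t with PNode v cs =>
    PNode v (if v == k then S :: map (graft k S) cs else map (graft k S) cs) end.

Fixpoint ungraft (k : nat) (t : ptree) : ptree :=
  match t with PNode v cs =>
    PNode v (if v == k then (if cs is _ :: cs' then map (ungraft k) cs' else [::])
             else map (ungraft k) cs) end.

Lemma graftE k S v cs : graft k S (PNode v cs) =
  PNode v (if v == k then S :: map (graft k S) cs else map (graft k S) cs).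
Proof. by []. Qed.

Lemma mem_graft_children k S v cs c :
  c \in cs -> graft k S c \in (if v == k then S :: map (graft k S) cs else map (graft k S) cs).
Proof. by move=> hc; case: (v == k); rewrite ?in_cons map_f ?orbT. Qed.

Lemma graftK k S t : ungraft k (graft k S t) = t.
Proof.
elim/ptree_ind_mem: t => v cs IH /=; case: eqP => _ /=; congr PNode;
  by rewrite -map_comp -[RHS]map_id; apply/eq_in_map => c /IH.
Qed.

Lemma graft_id k S t : k \notin labels t -> graft k S t = t.
Proof.
elim/ptree_ind_mem: t => v cs IH; rewrite mem_labels negb_or => /andP [hv hcs] /=.
rewrite eq_sym (negbTE hv); congr PNode; rewrite -[RHS]map_id; apply/eq_in_map => c hc.
by apply: IH => //; apply: contra hcs => h; apply/hasP; exists c.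
Qed.

Lemma graft_inj k S S' t t' : k \in labels t ->
  graft k S t = graft k S' t' -> S = S' /\ t = t'.
Proof.
move=> hk e; have et : t = t' by rewrite -(graftK k S t) e graftK.
subst t'; split=> //; elim/ptree_ind_mem: t hk e => v cs IH.
rewrite mem_labels /= => hk; case: eqP => hv; first by case.
move: hk; rewrite (introF eqP (fun e => hv (esym e))) /= => /hasP [c hc hkc] [] e.
apply: (IH c hc hkc); have := congr1 (fun l => nth (PNode 0 [::]) l (index c cs)) e.
by rewrite !(nth_map (PNode 0 [::])) ?index_mem // nth_index.
Qed.

Lemma mem_graft k S t x : (x \in labels (graft k S t)) =
  (x \in labels t) || (k \in labels t) && (x \in labels S).
Proof.
elim/ptree_ind_mem: t => v cs IH; rewrite graftE !mem_labels.
have hcs : has (fun c => x \in labels c) (map (graft k S) cs) =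
    has (fun c => x \in labels c) cs || has (fun c => k \in labels c) cs && (x \in labels S).
  rewrite has_map; apply/hasP/idP => [[c hc /=]|].
    rewrite IH // => /orP [h|/andP [h1 h2]]; first by apply/orP; left; apply/hasP; exists c.
    by apply/orP; right; rewrite h2 andbT; apply/hasP; exists c.
  case/orP=> [/hasP [c hc h]|/andP [/hasP [c hc h] h2]]; exists c => //=;
    by rewrite IH // ?h ?h2 ?orbT.
case: (eqVneq v k) => [->|hv] /=; rewrite ?hcs ?eqxx /=; last by rewrite orbA.
by case: (x == k); case: (x \in labels S); rewrite /= ?orbT ?andbT ?andbF ?orbF.
Qed.

Lemma size_labels_graft k S t : size (labels (graft k S t)) =
  size (labels t) + count_mem k (labels t) * size (labels S).
Proof.
elim/ptree_ind_mem: t => v cs IH; rewrite graftE !labelsE /= !size_flatten count_flatten.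
rewrite /shape -!map_comp !sumnE !big_map.
have sum_cs : \sum_(c <- cs) size (labels (graft k S c)) =
    \sum_(c <- cs) size (labels c) + (\sum_(c <- cs) count_mem k (labels c)) * size (labels S).
  by rewrite (eq_big_seq _ IH) big_split big_distrl.
case: (eqVneq v k) => _; rewrite /= ?big_cons big_map sum_cs /=; lia.
Qed.

Lemma decreasing_graft k S t : decreasing S -> (forall x, x \in labels S -> x < k) ->
  decreasing t -> decreasing (graft k S t).
Proof.
move=> dS hS; elim/ptree_ind_mem: t => v cs IH /decreasingE hd; rewrite graftE.
have hch c' : c' \in map (graft k S) cs -> (forall x, x \in labels c' -> x < v) /\ decreasing c'.
  case/mapP=> c hc ->; have [h1 h2] := hd c hc; split; last exact: IH.
  by move=> x; rewrite mem_graft => /orP [/h1 //|/andP [/h1 hk /hS hx]]; apply: ltn_trans hx hk.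
apply/decreasingE => c'; case: eqP => [e|_]; last exact: hch.
by subst k; rewrite in_cons => /orP [/eqP ->|hc]; [split|exact: hch].
Qed.

Lemma decreasing_graft_inv k S t : decreasing (graft k S t) -> decreasing t.
Proof.
elim/ptree_ind_mem: t => v cs IH; rewrite graftE => /decreasingE hd.
apply/decreasingE => c hc; have [h1 h2] := hd _ (mem_graft_children k S v hc).
by split; [move=> x hx; apply: h1; rewrite mem_graft hx|exact: IH].
Qed.

Lemma decreasing_graft_scion k S t : decreasing (graft k S t) -> k \in labels t ->
  decreasing S /\ (forall x, x \in labels S -> x < k).
Proof.
elim/ptree_ind_mem: t => v cs IH; rewrite graftE => /decreasingE hd.
rewrite mem_labels; case: (eqVneq v k) => [e _|hv /= /hasP [c hc hk]].
  subst k; have hS : S \in (if v == v then S :: map (graft v S) cs else map (graft v S) cs).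
    by rewrite eqxx mem_head.
  by have [] := hd S hS.
have [_ h2] := hd _ (mem_graft_children k S v hc).
exact: IH h2 hk.
Qed.

Lemma mem_leaves_graft k S t x : x \in leaves (graft k S t) ->
  x \in leaves S \/ (x \in leaves t /\ x != k).
Proof.
elim/ptree_ind_mem: t => v cs IH; rewrite graftE.
case: (eqVneq v k) => [e|hv] /mem_leaves [[]|[c]] //.
- rewrite in_cons => /orP [/eqP -> ->|/mapP [c' hc' ->] hx]; first by left.
  have [h|[h1 h2]] := IH c' hc' hx; first by left.
  by right; split=> //; apply: mem_leaves_child hc' h1.
- move=> e ->; right; split=> //; case: cs IH e => // _ _.
  by rewrite leavesE mem_head.
- move=> /mapP [c' hc' ->] hx; have [h|[h1 h2]] := IH c' hc' hx; first by left.
  by right; split=> //; apply: mem_leaves_child hc' h1.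
Qed.

Lemma mem_leaves_graftr k S t x : x \in leaves t -> x != k -> x \in leaves (graft k S t).
Proof.
elim/ptree_ind_mem: t => v cs IH; rewrite graftE.
move/mem_leaves => [[-> ->] hv|[c hc hx] hk].
  by case: ifP => [/eqP e|_]; [rewrite e eqxx in hv|rewrite /= inE].
exact: (mem_leaves_child v (mem_graft_children k S v hc) (IH c hc hx hk)).
Qed.

Lemma graft_id_map k S l : (forall c, c \in l -> k \notin labels c) -> map (graft k S) l = l.
Proof. by move=> h; rewrite -[RHS]map_id; apply/eq_in_map => c /h /graft_id. Qed.

Lemma uniq_labels_split v pre c post : uniq (labels (PNode v (pre ++ c :: post))) ->
  [/\ uniq (labels c), forall x, x \in labels c -> forall d, d \in pre -> x \notin labels d
    & forall x, x \in labels c -> forall d, d \in post -> x \notin labels d].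
Proof.
rewrite labelsE /= map_cat flatten_cat /= cat_uniq => /andP [_ /and3P [_ h1 h2]].
move: h2; rewrite cat_uniq => /and3P [uc h3 _]; split=> // x hx d hd.
  apply/negP => hxd; move/hasP: h1; apply; exists x; first by rewrite mem_cat hx.
  by apply/flattenP; exists (labels d) => //; apply: map_f.
apply/negP => hxd; move/hasP: h3; apply; exists x => //.
by apply/flattenP; exists (labels d) => //; apply: map_f.
Qed.

Lemma exists_graft k t : uniq (labels t) -> k \in labels t -> k \notin leaves t ->
  exists S t', t = graft k S t' /\ k \in labels t'.
Proof.
elim/ptree_ind_mem: t => v cs IH hu; rewrite mem_labels.
case: (eqVneq v k) => [<- _|hv /= /hasP [c hc hkc] hl].
  case: cs IH hu => [|S cs] IH hu; first by rewrite /= inE eqxx.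
  move=> _; exists S, (PNode v cs); split; last by rewrite labelsE mem_head.
  rewrite graftE eqxx graft_id_map // => d hd; apply: contraL hu => hvd.
  by rewrite labelsE /= mem_cat negb_and negbK; apply/orP; left; apply/orP; right;
    apply/flattenP; exists (labels d); rewrite ?map_f.
case/splitPr: hc IH hu hl => pre post IH hu hl.
have [uc hpre hpost] := uniq_labels_split hu.
have hcin : c \in pre ++ c :: post by rewrite mem_cat mem_head orbT.
have hlc : k \notin leaves c by apply: contra hl; apply: mem_leaves_child hcin.
have [S [c' [ec hk']]] := IH c hcin uc hkc hlc.
exists S, (PNode v (pre ++ c' :: post)); split.
  by rewrite graftE (negbTE hv) map_cat /= -ec !graft_id_map // => d hd; [apply: hpost|apply: hpre].
by rewrite mem_labels; apply/orP; right; apply/hasP; exists c'; rewrite // mem_cat mem_head orbT.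
Qed.

(** * Subsets of [1, m] *)

Fixpoint subsets (m : nat) : seq (seq nat) :=
  if m is m'.+1 then subsets m' ++ [seq rcons A m | A <- subsets m'] else [:: [::]].

Lemma iotaS_rcons m : iota 1 m.+1 = rcons (iota 1 m) m.+1.
Proof. by rewrite -cats1 -[m.+1]addn1 iotaD add1n addn1. Qed.

Lemma subsets_filter m A : A \in subsets m -> A = [seq x <- iota 1 m | x \in A].
Proof.
elim: m A => [|m IH] A; first by rewrite inE => /eqP ->.
rewrite iotaS_rcons /= filter_rcons mem_cat => /orP [hA|/mapP [B hB ->]].
  have hm : m.+1 \notin A by rewrite (IH _ hA) mem_filter mem_iota add1n ltnn !andbF.
  by rewrite (negbTE hm) -IH.
rewrite mem_rcons mem_head; congr rcons; rewrite {1}(IH _ hB); apply: eq_in_filter => x.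
by rewrite mem_iota mem_rcons inE add1n => /andP [_ /ltn_eqF ->].
Qed.

Lemma subsets_sorted m A : A \in subsets m -> sorted ltn A.
Proof.
by move/subsets_filter ->; apply: sorted_filter; [exact: ltn_trans|exact: iota_ltn_sorted].
Qed.

Lemma mem_subsets_range m A x : A \in subsets m -> x \in A -> 0 < x <= m.
Proof. by move/subsets_filter ->; rewrite mem_filter mem_iota add1n ltnS => /andP []. Qed.

Lemma filter_iota_subsets m (P : pred nat) : [seq x <- iota 1 m | P x] \in subsets m.
Proof.
elim: m => [|m IH] //; rewrite iotaS_rcons /= filter_rcons mem_cat.
by case: (P m.+1); rewrite ?IH // (map_f (rcons^~ m.+1) IH) orbT.
Qed.

Lemma subsets_uniq m : uniq (subsets m).
Proof.
elim: m => //= m IH; rewrite cat_uniq IH map_inj_uniq ?IH //; last exact: rcons_injl.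
rewrite andbT; apply/hasP => -[_ /mapP [A _ ->] /(@mem_subsets_range _ _ m.+1)].
by rewrite mem_rcons mem_head ltnn andbF => /(_ isT).
Qed.

Lemma sumn_subsets m (F : nat -> nat) :
  sumn [seq F (size A) | A <- subsets m] = \sum_(0 <= a < m.+1) 'C(m, a) * F a.
Proof.
elim: m F => [|m IH] F; first by rewrite big_nat1 /= bin0 mul1n addn0.
rewrite /= map_cat sumn_cat -map_comp.
have -> : [seq (F \o size) (rcons A m.+1) | A <- subsets m] = [seq F (size A).+1 | A <- subsets m].
  by apply/eq_map => A /=; rewrite size_rcons.
rewrite (IH (fun a => F a.+1)) IH [RHS]big_nat_recl // bin0 mul1n.
rewrite [X in _ = _ + X](eq_bigr (fun i => 'C(m, i.+1) * F i.+1 + 'C(m, i) * F i.+1)).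
  2: by move=> i _; rewrite binS mulnDl.
rewrite big_split /= [X in X + _ = _]big_nat_recl // bin0 mul1n.
rewrite [X in _ = _ + (X + _)]big_nat_recr //= bin_small // mul0n addn0.
lia.
Qed.

Definition nonempty_subsets m := [seq A <- subsets m | A != [::]].

Lemma sumn_nonempty_subsets m (F : nat -> nat) : F 0 = 0 ->
  sumn [seq F (size A) | A <- nonempty_subsets m] = \sum_(1 <= a < m.+1) 'C(m, a) * F a.
Proof.
move=> F0; have := sumn_subsets m F; rewrite big_ltn // F0 muln0 add0n => <-.
by rewrite /nonempty_subsets; elim: (subsets m) => // -[|x A] s IH /=; rewrite IH ?F0.
Qed.

Lemma mem_nonempty_subsets m A x : A \in nonempty_subsets m -> x \in A -> 0 < x <= m.
Proof. by rewrite mem_filter => /andP [_ /mem_subsets_range]; apply. Qed.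

Lemma subsets_eq m A A' : A \in subsets m -> A' \in subsets m -> A =i A' -> A = A'.
Proof.
move=> hA hA' eA; rewrite (subsets_filter hA) (subsets_filter hA').
by apply: eq_filter => x; rewrite /= eA.
Qed.

Lemma size_nonempty_subsets m A : A \in nonempty_subsets m -> 0 < size A <= m.
Proof.
rewrite mem_filter => /andP [A0 hA]; rewrite lt0n size_eq0 A0 /=.
have -> : m = size (iota 1 m) by rewrite size_iota.
apply: uniq_leq_size; first exact: (sorted_uniq ltn_trans ltnn (subsets_sorted hA)).
by move=> x /(mem_subsets_range hA); rewrite mem_iota add1n ltnS.
Qed.

(** * Decomposition of the trees counted by d *)

Definition trees_le n j t := dpt_on n t /\ largest_leaf t <= j.

Lemma d_counts n j m : 0 < j <= n -> counts (trees_le n j) m -> d n j = m.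
Proof.
move=> hj hc; rewrite /d hj; apply: (counts_unique _ hc).
by apply: (epsilon_spec (inhabits 0) (counts (trees_le n j))); exists m.
Qed.

Definition compl n (A : seq nat) := [seq x <- iota 1 n | x \notin A].

Lemma count_mem_sub (T : eqType) (A s : seq T) :
  uniq A -> {subset A <= s} -> uniq s -> count (mem A) s = size A.
Proof.
move=> uA sub us; rewrite -size_filter; apply/perm_size/uniq_perm; rewrite ?filter_uniq //.
by move=> x; rewrite mem_filter; apply/andP/idP => [[]|h] //; split=> //; apply: sub.
Qed.

Lemma size_compl n A : uniq A -> {subset A <= iota 1 n} -> size (compl n A) = n - size A.
Proof.
move=> uA sub; rewrite size_filter.
have := count_predC (mem A) (iota 1 n).
by rewrite count_mem_sub ?iota_uniq // size_iota => e; rewrite -[in RHS]e addKn.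
Qed.

Lemma index_compl n k A : 0 < k <= n -> uniq A -> {subset A <= iota 1 k.-1} ->
  (index k (compl n A)).+1 = k - size A.
Proof.
case: k => // k /andP [_ hkn] uA sub /=; rewrite /compl.
have -> : iota 1 n = iota 1 k ++ k.+1 :: iota k.+2 (n - k.+1).
  by rewrite {1}(_ : n = k + (n - k.+1).+1) ?iotaD ?add1n //; lia.
have kA : k.+1 \notin A by apply/negP => /sub; rewrite mem_iota add1n ltnn andbF.
rewrite filter_cat index_cat mem_filter mem_iota add1n ltnn !andbF /= kA /= eqxx addn0.
have := count_predC (mem A) (iota 1 k).
rewrite size_filter count_mem_sub ?iota_uniq // size_iota => e.
by rewrite -[in RHS]e -addnS addKn.
Qed.

Lemma sorted_leq_last (X : seq nat) x : sorted ltn X -> x \in X -> x <= last 0 X.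
Proof.
move=> so hx; have X0 : 0 < size X by case: X hx {so}.
have uX : uniq X := sorted_uniq ltn_trans ltnn so.
have hl : last 0 X \in X by rewrite -nth_last mem_nth // prednK.
rewrite leqNgt -(sorted_ltn_index_mono so hl hx) -leqNgt -nth_last index_uniq ?prednK //.
by rewrite -ltnS prednK // index_mem.
Qed.

Section GraftDecomposition.
Variables (n k : nat).
Hypotheses (hk : 2 <= k) (hkn : k <= n).

Let scion_labels A x : A \in nonempty_subsets k.-1 -> x \in A -> 0 < x < k.
Proof. by move=> hA /(mem_nonempty_subsets hA); case: k hk. Qed.

Lemma mem_compl_k A : A \in nonempty_subsets k.-1 -> k \in compl n A.
Proof.
move=> hA; rewrite mem_filter mem_iota add1n ltnS hkn andbT (leq_trans _ hk) // andbT.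
by apply/negP => /(scion_labels hA); rewrite ltnn andbF.
Qed.

Lemma trees_le_graft A S T : A \in nonempty_subsets k.-1 -> tree_on A S ->
  tree_on (compl n A) T -> all (leq^~ k) (leaves T) -> trees_le n k.-1 (graft k S T).
Proof.
move=> hA [uS mS dS] [uT mT dT] lT.
have kT : k \in labels T by rewrite mT mem_compl_k.
have ltSk x : x \in labels S -> x < k by rewrite mS => /(scion_labels hA) /andP [].
split; last first.
  rewrite largest_leaf_leq; apply/allP => x /mem_leaves_graft [/leaves_sub_labels /ltSk|[h1 h2]].
    by case: k hk.
  by have := allP lT x h1; rewrite leq_eqVlt (negbTE h2) /=; case: k hk.
apply/dpt_on_tree_on; split; last exact: decreasing_graft.
- apply: (@leq_size_uniq _ (labels T ++ labels S)).
  + rewrite cat_uniq uT uS andbT; apply/hasP => -[x].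
    by rewrite mS mT mem_filter => /= xA; rewrite xA.
  + by move=> x; rewrite mem_cat mem_graft kT.
  + by rewrite size_labels_graft count_uniq_mem // kT mul1n size_cat.
- move=> x; rewrite mem_graft kT /= mT mS mem_filter.
  case xA: (x \in A) => /=; last by rewrite orbF.
  rewrite mem_iota add1n ltnS; have /andP [-> /ltnW xk] := scion_labels hA xA.
  by rewrite (leq_trans xk hkn).
Qed.

Lemma graft_of_trees_le t : trees_le n k.-1 t -> exists A S T,
  [/\ A \in nonempty_subsets k.-1, tree_on A S, tree_on (compl n A) T,
      all (leq^~ k) (leaves T) & t = graft k S T].
Proof.
move=> [/dpt_on_tree_on [ut mt dt]]; rewrite largest_leaf_leq => /allP hl.
have kt : k \in labels t by rewrite mt mem_iota add1n ltnS hkn (leq_trans _ hk).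
have nkl : k \notin leaves t by apply/negP => /hl; rewrite leqNgt ltn_predL (ltnW hk).
have [S [T [et kT]]] := exists_graft ut kt nkl; subst t.
have [dS ltSk] := decreasing_graft_scion dt kT.
have dT := decreasing_graft_inv dt.
have uTS : uniq (labels T ++ labels S).
  apply: (leq_size_uniq ut) => [x|]; first by rewrite mem_graft mem_cat kT.
  rewrite size_cat size_labels_graft leq_add2l leq_pmull // -has_count.
  by apply/hasP; exists k; rewrite /= ?eqxx.
move: uTS; rewrite cat_uniq => /and3P [uT /hasPn disj uS].
have Srange x : x \in labels S -> 0 < x <= k.-1.
  move=> hx; have : x \in labels (graft k S T) by rewrite mem_graft kT hx orbT.
  by rewrite mt mem_iota add1n => /andP [-> _] /=; rewrite -ltnS prednK ?(ltnW hk) // ltSk.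
pose A := [seq x <- iota 1 k.-1 | x \in labels S].
have mA : A =i labels S.
  move=> x; rewrite mem_filter mem_iota add1n ltnS.
  by case hx: (x \in labels S) => //; have /andP [-> ->] := Srange x hx.
exists A, S, T; split=> //.
- rewrite mem_filter filter_iota_subsets andbT; apply/eqP => A0.
  have [v rS] : exists v, v \in labels S by case: (S) => v cs; exists v; rewrite labelsE mem_head.
  by move: rS; rewrite -mA A0.
- by split=> //; apply/eq_mem_sym.
- split=> // x; rewrite mem_filter mA -mt mem_graft kT /=.
  case xS: (x \in labels S); last by rewrite orbF.
  by rewrite orbT andbT; apply/negbTE/disj.
- apply/allP => x hx; case: (eqVneq x k) => [-> //|hxk].
  exact: leq_trans (hl x (mem_leaves_graftr S hx hxk)) (leq_pred k).
Qed.
End GraftDecomposition.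

Lemma counts_trees_le_graft n k (mS mT : seq nat -> nat) : 2 <= k -> k <= n ->
  (forall A, A \in nonempty_subsets k.-1 -> counts (tree_on A) (mS A)) ->
  (forall A, A \in nonempty_subsets k.-1 ->
     counts (fun T => tree_on (compl n A) T /\ all (leq^~ k) (leaves T)) (mT A)) ->
  counts (trees_le n k.-1) (sumn [seq mS A * mT A | A <- nonempty_subsets k.-1]).
Proof.
move=> hk hkn hS hT.
have kT A T : A \in nonempty_subsets k.-1 -> tree_on (compl n A) T -> k \in labels T.
  by move=> hA [_ -> _]; apply: mem_compl_k.
pose grafts A t := exists S T,
  [/\ tree_on A S, tree_on (compl n A) T /\ all (leq^~ k) (leaves T) & t = graft k S T].
apply: counts_ext _ (counts_sumn (P := grafts) _ _ _) => [t|||].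
- split=> [[A hA [S [T [hAS [hAT hlT] ->]]]]|]; first exact: (trees_le_graft hk hkn hA hAS hAT hlT).
  case/(graft_of_trees_le hk hkn) => A [S [T [hA hAS hAT hlT ->]]].
  by exists A => //; exists S, T.
- exact/filter_uniq/subsets_uniq.
- move=> A hA; apply: counts_mul (hS A hA) (hT A hA) _.
  by move=> S T S' T' _ [hAT _] _ _; apply: graft_inj; apply: kT hAT.
- move=> A A' t hA hA' [S [T [[_ lS _] [hAT _] ->]]] [S' [T' [[_ lS' _] _ e]]].
  have [eS _] := graft_inj (kT _ _ hA hAT) e.
  move: hA hA'; rewrite !mem_filter => /andP [_ hA] /andP [_ hA'].
  by apply: (subsets_eq hA hA') => x; rewrite -lS -lS' eS.
Qed.

Lemma counts_tree_on_subset m A c : A \in nonempty_subsets m ->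
  counts (trees_le (size A) (size A)) c -> counts (tree_on A) c.
Proof.
rewrite mem_filter => /andP [A0 /subsets_sorted so] hc.
have A_gt0 : 0 < size A by rewrite lt0n size_eq0.
have uA : uniq A := sorted_uniq ltn_trans ltnn so.
have lA : last 0 A \in A by rewrite -nth_last mem_nth // prednK.
have ilA : (index (last 0 A) A).+1 = size A by rewrite -nth_last index_uniq ?prednK // ltn_predL.
rewrite -[in X in trees_le _ X]ilA in hc; apply: counts_ext _ (counts_tree_on_sorted so lA hc) => t.
split=> [[]//|htA]; split=> //; apply/allP => x /leaves_sub_labels.
by case: htA => _ -> _; apply: sorted_leq_last.
Qed.

Lemma counts_tree_on_compl n k A c : 2 <= k -> k <= n -> A \in nonempty_subsets k.-1 ->
  counts (trees_le (n - size A) (k - size A)) c ->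
  counts (fun T => tree_on (compl n A) T /\ all (leq^~ k) (leaves T)) c.
Proof.
move=> hk hkn hA hc.
have sorted_compl : sorted ltn (compl n A).
  by apply: sorted_filter; [exact: ltn_trans|exact: iota_ltn_sorted].
have uA : uniq A.
  by move: hA; rewrite mem_filter => /andP [_ /subsets_sorted /(sorted_uniq ltn_trans ltnn)].
have subA : {subset A <= iota 1 k.-1}.
  by move=> x /(mem_nonempty_subsets hA); rewrite mem_iota add1n ltnS.
have subA' : {subset A <= iota 1 n}.
  move=> x /subA; rewrite !mem_iota => /andP [-> /leq_trans]; apply.
  by rewrite add1n ltnS (leq_trans (leq_pred k)).
apply: (counts_tree_on_sorted sorted_compl (mem_compl_k hk hkn hA)).
by rewrite size_compl // index_compl // (ltnW hk).
Qed.

Lemma counts_trees_le_sum n k : 2 <= k -> k <= n ->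
  (forall n', n' < n -> forall j, 0 < j <= n' -> counts (trees_le n' j) (d n' j)) ->
  counts (trees_le n k.-1)
    (sumn [seq d (size A) (size A) * d (n - size A) (k - size A) | A <- nonempty_subsets k.-1]).
Proof.
move=> hk hkn IH; apply: counts_trees_le_graft => // A hA;
  have /andP [A_gt0 A_le] := size_nonempty_subsets hA;
  have A_lt : size A < k by rewrite -(prednK (ltnW hk)) ltnS.
  apply: (counts_tree_on_subset hA); apply: IH; last by rewrite A_gt0 leqnn.
  exact: leq_trans A_lt hkn.
apply: counts_tree_on_compl => //; apply: IH.
  by rewrite ltn_subrL A_gt0 (leq_trans (ltnW hk) hkn).
by rewrite subn_gt0 A_lt leq_sub2r.
Qed.

Lemma dpt_on1 t : dpt_on 1 t -> t = PNode 1 [::].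
Proof.
case: t => v cs /dpt_on_tree_on [u m _].
have sz : size (labels (PNode v cs)) <= 1.
  by have := uniq_leq_size u (s2 := iota 1 1); rewrite size_iota; apply=> x; rewrite m.
have -> : v = 1 by have := m v; rewrite labelsE mem_head inE => /esym /eqP.
by case: cs sz {u m} => // -[w ws] cs; rewrite labelsE.
Qed.

Lemma counts_trees_le1 : counts (trees_le 1 1) 1.
Proof.
apply/countsE; exists [:: PNode 1 [::]]; split=> // t; rewrite inE.
split=> [/eqP ->|[/dpt_on1 -> _] //]; split=> //.
by apply/dpt_on_tree_on; split=> //= x; rewrite !inE.
Qed.

Lemma largest_leaf_root n t : 2 <= n -> dpt_on n t -> largest_leaf t <= n.-1.
Proof.
case: t => v cs hn /dpt_on_tree_on [u m dd].
have mn x : (x \in labels (PNode v cs)) = (0 < x <= n) by rewrite m mem_iota add1n ltnS.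
have vn : v <= n by have := mn v; rewrite labelsE mem_head => /esym /andP [].
rewrite largest_leaf_leq; apply/allP => x /mem_leaves [[cs0 _]|[c hc hx]].
  have h1 : 1 \in labels (PNode v cs) by rewrite mn /= ltnW.
  have hn' : n \in labels (PNode v cs) by rewrite mn leqnn ltnW.
  by move: h1 hn'; rewrite cs0 labelsE !inE => /eqP <- /eqP en; rewrite en in hn.
move/decreasingE: dd => /(_ c hc) [/(_ x (leaves_sub_labels hx)) xv _].
by rewrite -ltnS prednK ?(ltnW hn) // (leq_trans xv vn).
Qed.

(* For j < n decompose with k = j + 1; for j = n >= 2 the root n is not a leaf, so the
   trees with L(T) <= n are those with L(T) <= n - 1. *)
Lemma counts_trees_le n j : 0 < j <= n -> counts (trees_le n j) (d n j).
Proof.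
elim/ltn_ind: n j => n IH j /andP [j_gt0 jn].
have [n1|n_gt1] := leqP n 1.
  have n_eq1 : n = 1 by lia.
  have j_eq1 : j = 1 by lia.
  rewrite n_eq1 j_eq1 (@d_counts 1 1 1 isT counts_trees_le1); exact: counts_trees_le1.
suff [m hm] : exists m, counts (trees_le n j) m by rewrite (d_counts _ hm) ?j_gt0.
have [jn'|jn'] := ltnP j n.
  by eexists; apply: (counts_trees_le_sum (k := j.+1)) => //; rewrite ltnS.
have <- : n = j by apply/eqP; rewrite eqn_leq jn jn'.
eexists; apply: counts_ext _ (counts_trees_le_sum n_gt1 (leqnn n) IH) => t.
by split=> -[tn lt]; split=> //; [apply: leq_trans lt (leq_pred n)|apply: largest_leaf_root].
Qed.

Theorem lemma11p2 (n k : nat) (hk : 2 <= k) (hkn : k <= n) :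
  d n k.-1 = \sum_(1 <= a < k) 'C(k.-1, a) * d a a * d (n - a) (k - a).
Proof.
have hc := counts_trees_le_sum hk hkn (fun n' _ => @counts_trees_le n').
rewrite (d_counts _ hc); last by rewrite -ltnS prednK ?hk ?(leq_trans (leq_pred k)) // ltnW.
rewrite (@sumn_nonempty_subsets _ (fun a => d a a * d (n - a) (k - a))) // prednK ?(ltnW hk) //.
by apply: eq_bigr => a _; rewrite mulnA.
Qed.
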